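(* Let $\mathcal{P}$ be a topological property and let $X$ be a $T_1$-space with at least two points. Then $X$ is locally $\mathcal{P}$ if and only if every card of $X$ is locally $\mathcal{P}$. In particular, if $X$ and $Z$ are $T_1$-spaces with $\mathcal{D}(X)=\mathcal{D}(Z)$ (and at least two points), then $X$ is locally $\mathcal{P}$ if and only if $Z$ is locally $\mathcal{P}$.
   Context: A space $X$ is locally $\mathcal{P}$ if for every $x \in X$ and every open $U \ni x$ there is $A \subseteq X$ with $x \in \operatorname{int}(A) \subseteq A \subseteq U$ such that $A$ (as a subspace) has $\mathcal{P}$. For a topological space $X$ and $x \in X$, the set $X\setminus\{x\}$ carries the subspace topology. A card of $X$ is a space homeomorphic to $X \setminus \{x\}$ for some $x \in X$. The deck of $X$ is $\mathcal{D}(X)=\{[X\setminus\{x\}]_\sim : x \in X\}$, where $[Y]_\sim$ denotes the homeomorphism class of $Y$. *)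

From Stdlib Require Import Classical.

Record TopSpace : Type := mkTop {
  carrier :> Type;
  is_open : (carrier -> Prop) -> Prop;
  open_ext : forall U V : carrier -> Prop,
      (forall x, U x <-> V x) -> is_open U -> is_open V;
  open_full : is_open (fun _ => True);
  open_inter : forall U V, is_open U -> is_open V -> is_open (fun x => U x /\ V x);
  open_union : forall F : (carrier -> Prop) -> Prop,
      (forall U, F U -> is_open U) -> is_open (fun x => exists U, F U /\ U x)
}.

Arguments is_open {t} _.

Definition sub_open (X : TopSpace) (A : X -> Prop) (V : {x : X | A x} -> Prop) : Prop :=
  exists U : X -> Prop, is_open U /\ forall a, V a <-> U (proj1_sig a).

Lemma sub_open_ext (X : TopSpace) (A : X -> Prop) : forall U V : {x : X | A x} -> Prop,
  (forall x, U x <-> V x) -> sub_open X A U -> sub_open X A V.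
Proof.
  intros U V H [W [HW HU]]. exists W; split; auto.
  intro a. rewrite <- H. apply HU.
Qed.

Lemma sub_open_full (X : TopSpace) (A : X -> Prop) : sub_open X A (fun _ => True).
Proof. exists (fun _ => True). split; [apply open_full | tauto]. Qed.

Lemma sub_open_inter (X : TopSpace) (A : X -> Prop) : forall U V, sub_open X A U -> sub_open X A V ->
  sub_open X A (fun x => U x /\ V x).
Proof.
  intros U V [U' [HU' EU]] [V' [HV' EV]].
  exists (fun x => U' x /\ V' x). split; [apply open_inter; auto|].
  intro a. rewrite EU, EV. tauto.
Qed.

Lemma sub_open_union (X : TopSpace) (A : X -> Prop) : forall F : ({x : X | A x} -> Prop) -> Prop,
  (forall U, F U -> sub_open X A U) -> sub_open X A (fun x => exists U, F U /\ U x).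
Proof.
  intros F HF.
  exists (fun x => exists W, (is_open W /\ exists V, F V /\ forall a, V a <-> W (proj1_sig a)) /\ W x).
  split.
  - apply open_union. intros W [HW _]; exact HW.
  - intro a; split.
    + intros [V [FV Va]]. destruct (HF V FV) as [W [HW EW]].
      exists W. split; [split; [exact HW | exists V; auto] | apply EW; exact Va].
    + intros [W [[HW [V [FV EV]]] Wa]]. exists V. split; [exact FV | apply EV; exact Wa].
Qed.

Definition subspace (X : TopSpace) (A : X -> Prop) : TopSpace :=
  @mkTop {x : X | A x} (sub_open X A) (sub_open_ext X A) (sub_open_full X A)
         (sub_open_inter X A) (sub_open_union X A).

Definition continuous (X Y : TopSpace) (f : X -> Y) : Prop :=
  forall V : Y -> Prop, is_open V -> is_open (fun x => V (f x)).

Definition homeomorphic (X Y : TopSpace) : Prop :=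
  exists (f : X -> Y) (g : Y -> X),
    (forall x, g (f x) = x) /\ (forall y, f (g y) = y) /\
    continuous X Y f /\ continuous Y X g.

Definition topological_property (P : TopSpace -> Prop) : Prop :=
  forall X Y : TopSpace, homeomorphic X Y -> P X -> P Y.

Definition interior_pt (X : TopSpace) (A : X -> Prop) (x : X) : Prop :=
  exists V : X -> Prop, is_open V /\ V x /\ (forall y, V y -> A y).

(* X is locally P: for every x and open U ∋ x there is A with
   x ∈ int(A) ⊆ A ⊆ U and the subspace A has P.  (int(A) ⊆ A is automatic.) *)
Definition locally (P : TopSpace -> Prop) (X : TopSpace) : Prop :=
  forall (x : X) (U : X -> Prop), is_open U -> U x ->
    exists A : X -> Prop, interior_pt X A x /\ (forall y, A y -> U y) /\ P (subspace X A).

Definition T1 (X : TopSpace) : Prop :=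
  forall x y : X, x <> y -> exists U : X -> Prop, is_open U /\ U x /\ ~ U y.

Definition punctured (X : TopSpace) (x : X) : TopSpace :=
  subspace X (fun y => y <> x).

Definition is_card (X Y : TopSpace) : Prop :=
  exists x : X, homeomorphic Y (punctured X x).

(* D(X) = D(Z): the sets of homeomorphism classes of cards coincide. *)
Definition same_deck (X Z : TopSpace) : Prop :=
  (forall x : X, exists z : Z, homeomorphic (punctured X x) (punctured Z z)) /\
  (forall z : Z, exists x : X, homeomorphic (punctured Z z) (punctured X x)).

Definition at_least_two_points (X : TopSpace) : Prop :=
  exists x y : X, x <> y.

From Stdlib Require Import Classical.

(* Being locally P is a local property in the strong sense:
   (1) it passes from X to every open subspace W of X, and
   (2) it passes back to X from any cover of X by open subspaces.
   Both directions rest on one homeomorphism: a subspace B of a subspace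
   A of X is the same space as the subspace of X formed by the points of B
   (subspace_of_subspace); and on invariance of "locally P" under
   homeomorphism when P is topological (locally_topological).
   In a T1 space every punctured set X \ {y} is open, and if X has two
   points these sets cover X.  Hence X is locally P iff every X \ {x} is
   (locally_iff_punctured).  Since a card is a space homeomorphic to some
   X \ {x}, both statements of the theorem follow at once. *)

Lemma sig_eq {T : Type} {A : T -> Prop} (a b : {x | A x}) :
  proj1_sig a = proj1_sig b -> a = b.
Proof. destruct a, b; simpl; intros ->; f_equal; apply proof_irrelevance. Qed.

Lemma continuous_comp (X Y Z : TopSpace) (f : X -> Y) (g : Y -> Z) :
  continuous X Y f -> continuous Y Z g -> continuous X Z (fun x => g (f x)).
Proof. intros Hf Hg V HV. exact (Hf _ (Hg V HV)). Qed.

Lemma continuous_incl (X : TopSpace) (A : X -> Prop) :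
  continuous (subspace X A) X (fun a => proj1_sig a).
Proof. intros V HV. exists V; split; [exact HV | intros; tauto]. Qed.

Lemma continuous_into_subspace (Z X : TopSpace) (A : X -> Prop) (h : Z -> subspace X A) :
  continuous Z X (fun z => proj1_sig (h z)) -> continuous Z (subspace X A) h.
Proof.
  intros Hc V [U [HU EU]].
  apply open_ext with (fun z => U (proj1_sig (h z))).
  - intros z; rewrite EU; tauto.
  - apply Hc; exact HU.
Qed.

Lemma homeomorphic_refl (X : TopSpace) : homeomorphic X X.
Proof. exists (fun x => x), (fun x => x); repeat split; intros V HV; exact HV. Qed.

Lemma homeomorphic_sym (X Y : TopSpace) : homeomorphic X Y -> homeomorphic Y X.
Proof. intros [f [g [gf [fg [cf cg]]]]]. exists g, f; auto. Qed.

Lemma subspace_transport (Y Z : TopSpace) (f : Y -> Z) (g : Z -> Y) (A : Y -> Prop) :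
  (forall y, g (f y) = y) -> (forall z, f (g z) = z) ->
  continuous Y Z f -> continuous Z Y g ->
  homeomorphic (subspace Y A) (subspace Z (fun z => A (g z))).
Proof.
  intros gf fg cf cg.
  assert (Hf : forall a : subspace Y A, A (g (f (proj1_sig a)))).
  { intros a; rewrite gf; exact (proj2_sig a). }
  exists (fun a => exist (fun z => A (g z)) (f (proj1_sig a)) (Hf a)).
  exists (fun b => exist A (g (proj1_sig b)) (proj2_sig b)).
  split; [|split; [|split]].
  - intros a; apply sig_eq; apply gf.
  - intros b; apply sig_eq; apply fg.
  - apply continuous_into_subspace.
    exact (continuous_comp _ _ _ _ _ (continuous_incl Y A) cf).
  - apply continuous_into_subspace.
    exact (continuous_comp _ _ _ _ _ (continuous_incl Z _) cg).
Qed.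

(* A subspace B of the subspace A of X is homeomorphic to the subspace of X
   consisting of the points of B (given here as any C with the same points). *)
Lemma subspace_of_subspace (X : TopSpace) (A : X -> Prop)
    (B : subspace X A -> Prop) (C : X -> Prop) :
  (forall x, C x <-> exists h : A x, B (exist A x h)) ->
  homeomorphic (subspace (subspace X A) B) (subspace X C).
Proof.
  intros EC.
  assert (Hto : forall b : subspace (subspace X A) B, C (proj1_sig (proj1_sig b))).
  { intros [[x h] Bb]; apply EC; exists h; exact Bb. }
  assert (HA : forall c : subspace X C, A (proj1_sig c)).
  { intros [x Cx]; destruct (proj1 (EC x) Cx) as [h _]; exact h. }
  assert (HB : forall c : subspace X C, B (exist A (proj1_sig c) (HA c))).
  { intros [x Cx]; simpl; destruct (proj1 (EC x) Cx) as [h Bx].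
    rewrite (proof_irrelevance _ _ h); exact Bx. }
  exists (fun b => exist C (proj1_sig (proj1_sig b)) (Hto b)).
  exists (fun c => exist B (exist A (proj1_sig c) (HA c)) (HB c)).
  split; [|split; [|split]].
  - intros b; do 2 apply sig_eq; reflexivity.
  - intros c; apply sig_eq; reflexivity.
  - apply continuous_into_subspace.
    exact (continuous_comp _ _ _ _ _ (continuous_incl _ B) (continuous_incl X A)).
  - do 2 apply continuous_into_subspace; apply continuous_incl.
Qed.

Lemma locally_topological (P : TopSpace -> Prop) :
  topological_property P -> topological_property (locally P).
Proof.
  intros HP Y Z [f [g [gf [fg [cf cg]]]]] HY z U HU Uz.
  destruct (HY (g z) (fun y => U (f y)) (cf U HU)) as [A [[V [HV [Vz VA]]] [AU PA]]].
  { rewrite fg; exact Uz. }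
  exists (fun w => A (g w)). split; [|split].
  - exists (fun w => V (g w)); split; [apply cg; exact HV | split; auto].
  - intros w Aw; rewrite <- (fg w); apply AU; exact Aw.
  - exact (HP _ _ (subspace_transport Y Z f g A gf fg cf cg) PA).
Qed.

Lemma locally_open_subspace (P : TopSpace -> Prop) (X : TopSpace) (W : X -> Prop) :
  topological_property P -> is_open W -> locally P X -> locally P (subspace X W).
Proof.
  intros HP HW HX [p Wp] U' [U [HU EU]] Up.
  destruct (HX p (fun z => U z /\ W z) (open_inter _ _ _ HU HW))
    as [A [[V [HV [Vp VA]]] [AU PA]]].
  { split; [apply (EU (exist W p Wp)); exact Up | exact Wp]. }
  exists (fun q => A (proj1_sig q)). split; [|split].
  - exists (fun q => V (proj1_sig q)). split; [|split; [exact Vp | intros q; apply VA]].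
    exists V; split; [exact HV | intros; tauto].
  - intros q Aq; apply EU; apply (AU _ Aq).
  - apply (HP (subspace X A)); [|exact PA].
    apply homeomorphic_sym, subspace_of_subspace.
    intros x; split; [intros Ax; exists (proj2 (AU x Ax)); exact Ax | intros [h Ax]; exact Ax].
Qed.

Lemma locally_of_open_cover (P : TopSpace -> Prop) (X : TopSpace) :
  topological_property P ->
  (forall x : X, exists W, is_open W /\ W x /\ locally P (subspace X W)) ->
  locally P X.
Proof.
  intros HP Hcover x U HU Ux.
  destruct (Hcover x) as [W [HW [Wx HWloc]]].
  destruct (HWloc (exist W x Wx) (fun q => U (proj1_sig q)))
    as [A' [[V' [[V [HV EV]] [Vx VA]]] [AU PA]]].
  { exists U; split; [exact HU | intros; tauto]. }
  { exact Ux. }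
  exists (fun z => exists h : W z, A' (exist W z h)). split; [|split].
  - exists (fun z => V z /\ W z). split; [apply open_inter; assumption|split].
    + split; [apply (EV (exist W x Wx)); exact Vx | exact Wx].
    + intros z [Vz Wz]. exists Wz. apply VA. apply (EV (exist W z Wz)). exact Vz.
  - intros z [h Az]. exact (AU _ Az).
  - apply (HP (subspace (subspace X W) A')); [|exact PA].
    apply subspace_of_subspace; intros z; tauto.
Qed.

Lemma T1_punctured_open (X : TopSpace) (x : X) :
  T1 X -> is_open (fun y : X => y <> x).
Proof.
  intros HT.
  apply open_ext with (fun y => exists U, (is_open U /\ ~ U x) /\ U y).
  - intros y; split.
    + intros [U [[_ Ux] Uy]] ->; contradiction.
    + intros yx; destruct (HT y x yx) as [U [HU [Uy Ux]]]; exists U; auto.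
  - apply open_union; intros U [HU _]; exact HU.
Qed.

Lemma exists_other_point (X : TopSpace) (x : X) :
  at_least_two_points X -> exists y : X, y <> x.
Proof.
  intros [a [b ab]].
  destruct (classic (a = x)) as [<- | ax]; [exists b; congruence | exists a; exact ax].
Qed.

Lemma locally_iff_punctured (P : TopSpace -> Prop) (X : TopSpace) :
  topological_property P -> T1 X -> at_least_two_points X ->
  (locally P X <-> forall x : X, locally P (punctured X x)).
Proof.
  intros HP HT H2. split.
  - intros HX x. apply locally_open_subspace; auto. apply T1_punctured_open; exact HT.
  - intros Hpunct. apply locally_of_open_cover; [exact HP|]. intros x.
    destruct (exists_other_point X x H2) as [y yx].
    exists (fun z => z <> y). split; [apply T1_punctured_open; exact HT|].
    split; [congruence | exact (Hpunct y)].
Qed.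

Lemma locally_iff_cards (P : TopSpace -> Prop) (X : TopSpace) :
  topological_property P -> T1 X -> at_least_two_points X ->
  (locally P X <-> forall Y : TopSpace, is_card X Y -> locally P Y).
Proof.
  intros HP HT H2. rewrite (locally_iff_punctured P X HP HT H2). split.
  - intros Hpunct Y [x Hx].
    exact (locally_topological P HP _ _ (homeomorphic_sym _ _ Hx) (Hpunct x)).
  - intros Hcards x. apply Hcards. exists x. apply homeomorphic_refl.
Qed.

Lemma locally_same_deck (P : TopSpace -> Prop) (X Z : TopSpace) :
  topological_property P ->
  T1 X -> T1 Z -> at_least_two_points X -> at_least_two_points Z ->
  same_deck X Z -> (locally P X <-> locally P Z).
Proof.
  intros HP HTX HTZ H2X H2Z [DXZ DZX].
  rewrite (locally_iff_punctured P X HP HTX H2X), (locally_iff_punctured P Z HP HTZ H2Z).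
  split; intros Hpunct.
  - intros z; destruct (DZX z) as [x Hx].
    exact (locally_topological P HP _ _ (homeomorphic_sym _ _ Hx) (Hpunct x)).
  - intros x; destruct (DXZ x) as [z Hz].
    exact (locally_topological P HP _ _ (homeomorphic_sym _ _ Hz) (Hpunct z)).
Qed.

Theorem theorem3p2 :
  (forall (P : TopSpace -> Prop) (X : TopSpace),
      topological_property P -> T1 X -> at_least_two_points X ->
      (locally P X <-> forall Y : TopSpace, is_card X Y -> locally P Y)) /\
  (forall (P : TopSpace -> Prop) (X Z : TopSpace),
      topological_property P ->
      T1 X -> T1 Z -> at_least_two_points X -> at_least_two_points Z ->
      same_deck X Z ->
      (locally P X <-> locally P Z)).
Proof.
  split.
  - exact locally_iff_cards.
  - exact locally_same_deck.
Qed.
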